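(* Let $q=4$ and let $k>0$ be an even integer, and put $e=3k$. Then the polynomial $$g=S_{k+1}^2+S_{2k}^{q^k+1}\in\mathbb{F}_2[x]$$ is a permutation polynomial of $\mathbb{F}_{q^e}=\mathbb{F}_{4^{3k}}$.
   Context: For a prime power $q$, $\mathbb{F}_q$ denotes the finite field with $q$ elements, and $p=\operatorname{char}\mathbb{F}_q$. For a positive integer $m$, $S_m=S_{m,q}=x+x^q+x^{q^2}+\cdots+x^{q^{m-1}}\in\mathbb{F}_p[x]$ (with $q$ fixed, written $S_m$). Powers such as $S_m^2$, $S_m^{q^k+1}$ denote powers of the polynomial $S_m$. A polynomial $f\in\mathbb{F}_Q[x]$ is a permutation polynomial (PP) of $\mathbb{F}_Q$ if the map $c\mapsto f(c)$ is a bijection of $\mathbb{F}_Q$. *)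

From HB Require Import structures.
From mathcomp Require Import all_boot all_order all_algebra all_field.
Set Implicit Arguments. Unset Strict Implicit. Unset Printing Implicit Defensive.
Import GRing.Theory.
Local Open Scope ring_scope.

(* S_{m,q} = x + x^q + ... + x^(q^(m-1)), a polynomial with 0/1 coefficients,
   viewed in R[x] (its image from F_p[x]). *)
Definition S_poly (R : nzRingType) (q m : nat) : {poly R} :=
  \sum_(i < m) 'X^(q ^ i).

Definition is_PP (F : finFieldType) (f : {poly F}) : Prop :=
  bijective (fun c : F => f.[c]).

From mathcomp Require Import all_boot all_order all_algebra all_field.
From mathcomp Require Import ring.
Set Implicit Arguments. Unset Strict Implicit. Unset Printing Implicit Defensive.
Import GRing.Theory.
Local Open Scope ring_scope.

(* Write Q = 4^k, y = S_k(x), A = S_{k+1}(x) = y + x^Q and B = S_{2k}(x) = y + y^Q,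
   so that y^4 = y + x^Q + x.  In characteristic 2 this gives
     g(x) + B^8 = x^2 + x^(2Q) + x^(2Q^2) + y y^Q + y^Q y^(Q^2) + y^(Q^2) y,
   which is invariant under z |-> z^Q, an automorphism of order 3 of F = F_(Q^3);
   moreover B + B^Q + B^(Q^2) = 0.  If g(x) = g(x + d), then B(d)^8 is the
   difference of two Q-invariant values, hence Q-invariant, and its "trace"
   B(d)^8 + B(d)^(8Q) + B(d)^(8Q^2) = 3 B(d)^8 = B(d)^8 vanishes; so B(d) = 0,
   then A(d) = 0, and for k even these two equations force d = 0. *)

Definition S4 (R : nzRingType) (m : nat) (c : R) : R := \sum_(i < m) c ^+ (4 ^ i).

Definition g (R : nzRingType) (k : nat) (c : R) : R :=
  S4 k.+1 c ^+ 2 + S4 (2 * k) c ^+ (4 ^ k + 1).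

Lemma horner_S_poly (R : comNzRingType) (m : nat) (c : R) :
  (S_poly R 4 m).[c] = S4 m c.
Proof. by rewrite horner_sum; apply: eq_bigr => i _; rewrite hornerXn. Qed.

Lemma expr_fix_expn (R : nzRingType) (d : R) (n j : nat) :
  d ^+ n = d -> d ^+ (n ^ j) = d.
Proof. by move=> dn; elim: j => [|j IHj]; rewrite ?expr1 // expnSr exprM IHj. Qed.

Section CharTwo.

Variable R : comNzRingType.
Hypothesis R2 : 2 \in [pchar R].

Lemma exprD_pow2 (n : nat) (a b : R) :
  (a + b) ^+ (2 ^ n) = a ^+ (2 ^ n) + b ^+ (2 ^ n).
Proof. by rewrite exprDn_pchar // pnatX pnatE // R2. Qed.

Lemma exprD_pow4 (n : nat) (a b : R) :
  (a + b) ^+ (4 ^ n) = a ^+ (4 ^ n) + b ^+ (4 ^ n).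
Proof. by rewrite -[4%N]/(2 ^ 2)%N -expnM exprD_pow2. Qed.

Lemma sqrrD_pchar2 (a b : R) : (a + b) ^+ 2 = a ^+ 2 + b ^+ 2.
Proof. exact: (exprD_pow2 1). Qed.

Lemma expr_sum_pow4 (n m : nat) (f : 'I_m -> R) :
  (\sum_(i < m) f i) ^+ (4 ^ n) = \sum_(i < m) f i ^+ (4 ^ n).
Proof.
apply: (big_morph (fun x : R => x ^+ (4 ^ n))); first exact: exprD_pow4.
by rewrite expr0n expn_eq0.
Qed.

Lemma S4D (m : nat) : {morph @S4 R m : a b / a + b}.
Proof.
by move=> a b; rewrite /S4 -big_split; apply: eq_bigr => i _; rewrite exprD_pow4.
Qed.

Lemma S4_addn (m n : nat) (c : R) : S4 (m + n) c = S4 m c + S4 n c ^+ (4 ^ m).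
Proof.
rewrite /S4 big_split_ord expr_sum_pow4; congr (_ + _).
by apply: eq_bigr => i _; rewrite -exprM -expnD [(i + m)%N]addnC.
Qed.

Lemma S4_1 (c : R) : S4 1 c = c.
Proof. by rewrite /S4 big_ord1 expr1. Qed.

Lemma S4S (m : nat) (c : R) : S4 m.+1 c = S4 m c + c ^+ (4 ^ m).
Proof. by rewrite -addn1 S4_addn S4_1. Qed.

Lemma S4Sr (m : nat) (c : R) : S4 m.+1 c = c + S4 m c ^+ 4.
Proof. by rewrite -add1n S4_addn S4_1. Qed.

Lemma S4_double (m : nat) (c : R) : S4 (2 * m) c = S4 m c + S4 m c ^+ (4 ^ m).
Proof. by rewrite mul2n -addnn S4_addn. Qed.

Lemma S4_eq0_fix (m : nat) (d : R) : S4 m d = 0 -> d ^+ (4 ^ m) = d.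
Proof. by move=> Sd0; have := S4Sr m d; rewrite S4S Sd0 expr0n add0r addr0. Qed.

Lemma S4_eq0_even (k : nat) (d : R) : ~~ odd k ->
  S4 k.+1 d = 0 -> S4 (2 * k) d = 0 -> d = 0.
Proof.
move=> k_even /[dup] A0 /S4_eq0_fix dA /S4_eq0_fix dB.
have d16 : d ^+ (4 * 4) = d.
  have : d ^+ (4 ^ k.+1 * 4 ^ k.+1) = d by rewrite exprM dA dA.
  by rewrite -expnD addnS addSn addnn -mul2n !expnSr -mulnA exprM dB.
have dQ : d ^+ (4 ^ k) = d.
  by rewrite -(odd_double_half k) (negbTE k_even) add0n -mul2n expnM expr_fix_expn.
have d4 : d ^+ 4 = d by rewrite -{2}dA expnSr exprM dQ.
move: A0; rewrite /S4 (eq_bigr (fun=> d)) => [|i _]; last exact: expr_fix_expn.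
rewrite sumr_const card_ord -mulr_natl -addn1 natrD.
have -> : k%:R = 0 :> R by apply/eqP; rewrite -(dvdn_pcharf R2) dvdn2.
by rewrite add0r mul1r.
Qed.

Lemma g_add_S4_double_pow8 (k : nat) (c : R) :
  let y := S4 k c in let Q := (4 ^ k)%N in
  g k c + S4 (2 * k) c ^+ 8 =
    c ^+ 2 + c ^+ Q ^+ 2 + c ^+ Q ^+ Q ^+ 2
    + y * y ^+ Q + y ^+ Q * y ^+ Q ^+ Q + y ^+ Q ^+ Q * y.
Proof.
move=> y /=.
have y4 : y ^+ 4 = y + c ^+ (4 ^ k) + c.
  by rewrite -(addKr_pchar2 R2 c (y ^+ 4)) -S4Sr S4S addrC.
have y4Q : y ^+ (4 ^ k) ^+ 4 = y ^+ (4 ^ k) + c ^+ (4 ^ k) ^+ (4 ^ k) + c ^+ (4 ^ k).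
  by rewrite exprAC y4 !exprD_pow4.
rewrite /g S4S S4_double -/y addn1 [_ ^+ (4 ^ k).+1]exprSr exprD_pow4.
rewrite -[8%N]/(4 * 2)%N exprM -[4%N]/(4 ^ 1)%N exprD_pow4 expn1 y4 y4Q.
move: (c ^+ _) (c ^+ _ ^+ _) (y ^+ _) (y ^+ _ ^+ _) => x1 x2 y1 y2.
rewrite !sqrrD_pchar2 -[RHS]addr0 -(addrr_pchar2 R2 (y ^+ 2 + x1 ^+ 2 + y1 ^+ 2)).
ring.
Qed.

End CharTwo.

Section FiniteField.

Variables (F : finFieldType) (k : nat).
Hypothesis cardF : #|F| = (4 ^ (3 * k))%N.
Local Notation Q := (4 ^ k)%N.

Lemma card_pchar2 : 2 \in [pchar F].
Proof. by apply: (card_finPcharP (n := 2 * (3 * k))); rewrite ?cardF ?expnM. Qed.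

Let F2 := card_pchar2.

Lemma exprQ3 (z : F) : z ^+ Q ^+ Q ^+ Q = z.
Proof. by rewrite -!exprM -!expnD -{2}(expf_card z) cardF !mulSn mul0n addn0 addnA. Qed.

Lemma g_add_S4_double_pow8_fixed (c : F) :
  (g k c + S4 (2 * k) c ^+ 8) ^+ Q = g k c + S4 (2 * k) c ^+ 8.
Proof.
rewrite g_add_S4_double_pow8 //; set y := S4 k c.
rewrite !(exprD_pow4 F2, exprMn) !exprQ3.
by move: (c ^+ Q) (c ^+ Q ^+ Q) (y ^+ Q) (y ^+ Q ^+ Q) => x1 x2 y1 y2; ring.
Qed.

Lemma S4_double_trace (c : F) :
  let b := S4 (2 * k) c in b + b ^+ Q + b ^+ Q ^+ Q = 0.
Proof.
rewrite /= S4_double // !exprD_pow4 // exprQ3.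
move: (S4 k c) (S4 k c ^+ Q) (S4 k c ^+ Q ^+ Q) => y y1 y2.
by rewrite -(addrr_pchar2 F2 (y + y1 + y2)); ring.
Qed.

Lemma g_injective : ~~ odd k -> injective (g k : F -> F).
Proof.
move=> k_even x x' gxx'.
pose G (c : F) := g k c + S4 (2 * k) c ^+ 8.
pose d := x' + x.
have x'E : x' = x + d by rewrite /d addrC addrK_pchar2.
set w := S4 (2 * k) d ^+ 8.
have S4x' m : S4 m x' = S4 m x + S4 m d by rewrite x'E S4D.
have GxE : G x' = G x + w.
  by rewrite /G gxx' S4x' -[8%N]/(2 ^ 3)%N exprD_pow2 // addrA.
have wQ : w ^+ Q = w.
  have -> : w = G x' + G x by rewrite GxE addrAC addrr_pchar2 // add0r.
  by rewrite exprD_pow4 // !g_add_S4_double_pow8_fixed.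
have w0 : w = 0.
  have := congr1 (fun z => z ^+ 8) (S4_double_trace d).
  rewrite /= -[8%N]/(2 ^ 3)%N !exprD_pow2 // -[(2 ^ 3)%N]/8%N !(exprAC _ Q 8) -/w.
  by rewrite !wQ addrr_pchar2 // add0r expr0n.
have Bd0 : S4 (2 * k) d = 0 by move/eqP: w0; rewrite /w expf_eq0 => /eqP.
have Ad0 : S4 k.+1 d = 0.
  move: gxx'; rewrite /g !S4x' Bd0 addr0 sqrrD_pchar2 // [RHS]addrAC -[LHS]addr0.
  by move=> /addrI /esym /eqP; rewrite expf_eq0 => /eqP.
by rewrite x'E (S4_eq0_even F2 k_even Ad0 Bd0) addr0.
Qed.

End FiniteField.

Theorem theorem2p1 (F : finFieldType) (k : nat) :
  (0 < k)%N -> ~~ odd k -> #|F| = (4 ^ (3 * k))%N ->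
  is_PP ((S_poly F 4 k.+1) ^+ 2 + (S_poly F 4 (2 * k)) ^+ (4 ^ k + 1)).
Proof.
(* 0 < k is implied by #|F| > 1. *)
move=> _ k_even cardF; apply: injF_bij => x x' /=.
rewrite !hornerD !horner_exp !horner_S_poly.
exact: g_injective.
Qed.
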